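(* Let $S$ be a numerical semigroup. Then the set of minimal elements of $(\mathrm{Betti}(S),\le_S)$ equals the set of minimal elements of $(\mathcal E(S),\le_S)$. Moreover, for every minimal element $\alpha$ of $(\mathcal E(S),\le_S)$ one has $e_\alpha=\mathfrak d(\alpha)-1=\mathrm i(\alpha)-1$.
   Context: A numerical semigroup $S$ is a submonoid of $(\mathbb N,+)$ with finite complement, with minimal generating set $A=\{n_1,\dots,n_e\}$. The cyclotomic exponent sequence is the unique integer sequence $(e_j)_{j\ge1}$ with $(1-x)\sum_{s\in S}x^s=\prod_{j\ge1}(1-x^j)^{e_j}$ in $\mathbb Z[[x]]$; $\mathcal E(S)=\{d\in\mathbb N: d\ge2,\ e_d\ne0,\ d\notin A\}$. Write $a\le_S b$ if $b-a\in S$. Let $\varphi:\mathbb N^e\to S$, $\varphi(a)=\sum_ia_in_i$; $\mathrm Z(s)=\varphi^{-1}(s)$ and $\mathfrak d(s)=|\mathrm Z(s)|$. $\nabla_s$ is the graph on $\mathrm Z(s)$ with distinct $x,y$ adjacent iff $x\cdot y\ne0$; $s$ is a Betti element if $\nabla_s$ is disconnected, $\mathrm{Betti}(S)$ is the set of Betti elements. A factorization $z\in\mathrm Z(s)$ is isolated if $z\cdot x=0$ for all $x\in\mathrm Z(s)\setminus\{z\}$; $\mathrm i(s)$ is the number of isolated factorizations of $s$. *)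

From HB Require Import structures.
From mathcomp Require Import all_boot all_order all_algebra.
Set Implicit Arguments. Unset Strict Implicit. Unset Printing Implicit Defensive.
Import Order.TTheory GRing.Theory Num.Theory.

(* A numerical semigroup S is given through its minimal generating set
   A = [:: n_1; ...; n_e] (listed in some order); S = <n_1,...,n_e>. *)

Section NumSemigroup.
Variable A : seq nat.
Local Notation e := (size A).
Local Notation n i := (nth 0%N A i).

Definition phi (a : 'I_e -> nat) : nat := (\sum_(i < e) a i * n i)%N.

(* A is a minimal generating set: no generator n_i is an N-combination of the
   other generators (this also forces n_i > 0 and the n_i pairwise distinct). *)
Definition min_gens : Prop :=
  forall i : 'I_e, ~ exists a : 'I_e -> nat, a i = 0%N /\ phi a = n i.

Definition cofinite_gen : Prop :=
  exists N : nat, forall s, (N <= s)%N -> exists a : 'I_e -> nat, phi a = s.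

Definition numerical_semigroup_mingens : Prop := min_gens /\ cofinite_gen.

(* Since all generators are >= 1, every coordinate of a
   factorization of s is <= s, so Z(s) is faithfully represented inside the
   finite type of vectors with coordinates in 'I_(s+1). *)
Definition fact_vec (s : nat) := {ffun 'I_e -> 'I_s.+1}.
Definition phiv (s : nat) (a : fact_vec s) : nat := (\sum_(i < e) a i * n i)%N.

Definition Z (s : nat) : {set fact_vec s} := [set a | phiv a == s].

Definition inS (s : nat) : bool := Z s != set0.

Definition leS (a b : nat) : bool := (a <= b)%N && inS (b - a).

Definition dnum (s : nat) : nat := #|Z s|.

Definition dotv (s : nat) (x y : fact_vec s) : nat :=
  (\sum_(i < e) (x i : nat) * (y i : nat))%N.

Definition nabla_rel (s : nat) : rel (fact_vec s) :=
  fun x y => [&& x \in Z s, y \in Z s, x != y & dotv x y != 0%N].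

Definition Betti (s : nat) : Prop :=
  exists x y : fact_vec s,
    [/\ x \in Z s, y \in Z s & ~~ connect (@nabla_rel s) x y].

Definition isolated (s : nat) (z : fact_vec s) : bool :=
  (z \in Z s) && [forall x, ((x \in Z s) && (x != z)) ==> (dotv z x == 0%N)].

Definition inum (s : nat) : nat := #|[set z : fact_vec s | isolated z]|.

Definition hilb_trunc (m : nat) : {poly int} :=
  (\sum_(0 <= s < m.+1 | inS s) 'X^s)%R.

(* (e_j)_{j>=1} is the cyclotomic exponent sequence of S:
   (1 - x) * sum_{s in S} x^s = prod_{j>=1} (1 - x^j)^{e_j}  in Z[[x]].
   Since each (1 - x^j) is a unit of Z[[x]] and (1-x^j)^{e_j} = 1 mod x^j,
   this is equivalent to: for every m, after moving the factors with negative
   exponent to the left, both sides agree modulo x^{m+1} (the factors with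
   j > m being = 1 mod x^{m+1}).  The value e 0 is irrelevant. *)
Definition cyclotomic_exponents (ex : nat -> int) : Prop :=
  forall m k : nat, (k <= m)%N ->
    (((1 - 'X) * hilb_trunc m *
        \prod_(1 <= j < m.+1 | ex j < 0) (1 - 'X^j) ^+ `|ex j|%N) `_ k)%R =
    ((\prod_(1 <= j < m.+1 | 0 < ex j) (1 - 'X^j) ^+ `|ex j|%N) `_ k)%R.

Definition Eset (ex : nat -> int) (d : nat) : Prop :=
  (2 <= d)%N /\ ex d <> 0%R /\ d \notin A.

Definition minimalS (P : nat -> Prop) (x : nat) : Prop :=
  P x /\ forall y, P y -> leS y x -> y = x.

End NumSemigroup.

(* Call s "ambiguous" when it has at least two factorizations.  The proof
   shows that both the minimal Betti elements and the minimal elements of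
   E(S) are exactly the minimal ambiguous elements for <=_S.

   Ambiguity is stable under adding elements of S, and two
      distinct factorizations of s sharing a generator n_i make s - n_i
      ambiguous.  Hence distinct factorizations of a minimal ambiguous u have
      disjoint supports: nabla_u has no edges, u is a Betti element, and all
      its factorizations are isolated, so i(u) = d(u).  Betti elements are
      ambiguous, and every ambiguous element lies above a minimal one; a
      sandwich argument then identifies the minimal elements.
   2. Exponents.  Truncating modulo x^(N+1), multiplying a series by 1 - x^j
      raises its j-th cyclotomic exponent by one, and the exponents are
      computed recursively from the coefficients.  Write K_N = H_N * P_A with
      P_A = prod_(a in A) (1 - x^a); its exponents are e_j - [j = 1] +
      [j in A].  Since D_N = prod_i sum_c x^(c n_i) inverts P_A and has
      coefficients d(s), K_N = 1 + (H_N - D_N) P_A is supported on ambiguous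
      degrees, with coefficient 1 - d(m) at a minimal ambiguous m.  Products
      of factors (1 - x^j)^a at ambiguous j share this support and are
      additive at minimal ambiguous degrees.  By induction, every nonzero
      exponent sits at an ambiguous degree (so E(S) consists of ambiguous
      elements), and at a minimal ambiguous m the recursion gives
      e_m = d(m) - 1 <> 0 (so m lies in E(S)). *)
From HB Require Import structures.
From mathcomp Require Import all_boot all_order all_algebra.
From mathcomp Require Import zify ring.
Import Order.TTheory GRing.Theory Num.Theory.
Set Implicit Arguments. Unset Strict Implicit. Unset Printing Implicit Defensive.

Section Factorizations.
Variable A : seq nat.
Hypothesis hmin : min_gens A.
Local Notation e := (size A).
Local Notation n i := (nth 0%N A i).
Local Notation phiA := (@phi A).

Lemma gens_pos (i : 'I_e) : 0 < n i.
Proof.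
rewrite lt0n; apply/negP => /eqP ni0; apply: (hmin (i := i)).
by exists (fun _ => 0); split => //; rewrite /phi big1 ?ni0.
Qed.

Lemma term_le_phi (f : 'I_e -> nat) (i : 'I_e) : f i * n i <= phiA f.
Proof. by rewrite /phi (bigD1 i) //= leq_addr. Qed.

Lemma coord_le_phi (f : 'I_e -> nat) (i : 'I_e) : f i <= phiA f.
Proof. by apply: leq_trans (term_le_phi f i); rewrite leq_pmulr ?gens_pos. Qed.

Lemma fact_of_fun (t : nat) (f : 'I_e -> nat) : phiA f = t ->
  exists2 v : fact_vec A t, v \in Z A t & forall k, (v k : nat) = f k.
Proof.
move=> hft; have fk k : f k < t.+1 by rewrite ltnS -hft coord_le_phi.
exists [ffun k => inord (f k)]; last by move=> k; rewrite ffunE inordK ?fk.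
rewrite inE /phiv; apply/eqP; rewrite -[RHS]hft; apply: eq_bigr => k _.
by rewrite ffunE inordK ?fk.
Qed.

Lemma inZ_phi (s : nat) (v : fact_vec A s) : (v \in Z A s) = (phiA (fun k => v k) == s).
Proof. by rewrite inE. Qed.

Lemma inS_fun t : inS A t <-> exists f : 'I_e -> nat, phiA f = t.
Proof.
split => [/set0Pn [v]|[f /fact_of_fun [v hv _]]]; last by apply/set0Pn; exists v.
by rewrite inE => /eqP hv; exists (fun k => nat_of_ord (v k)).
Qed.

Lemma inS0 : inS A 0.
Proof.
by apply/set0Pn; exists [ffun=> ord0]; rewrite inE /phiv big1 // => k _; rewrite ffunE.
Qed.

Lemma phiD (f g : 'I_e -> nat) : phiA (fun k => f k + g k) = phiA f + phiA g.
Proof. by rewrite /phi -big_split; apply: eq_bigr => k _; rewrite mulnDl. Qed.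

Lemma phi_delta (i : 'I_e) : phiA (fun k => k == i) = n i.
Proof.
rewrite /phi (bigD1 i) //= eqxx mul1n big1 ?addn0 // => k /negbTE ->.
exact: mul0n.
Qed.

Lemma inS_gen (i : 'I_e) : inS A (n i).
Proof. by apply/inS_fun; exists (fun k => k == i); rewrite phi_delta. Qed.

Lemma inS_add s t : inS A s -> inS A t -> inS A (s + t).
Proof.
move=> /inS_fun [f hf] /inS_fun [g hg]; apply/inS_fun.
by exists (fun k => f k + g k); rewrite phiD hf hg.
Qed.

Lemma phi_sub_delta (f : 'I_e -> nat) (i : 'I_e) : 0 < f i ->
  phiA (fun k => f k - (k == i)) = phiA f - n i.
Proof.
move=> fi; suff -> : phiA f = phiA (fun k => f k - (k == i)) + n i by rewrite addnK.
rewrite -(phi_delta i) -phiD /phi; apply: eq_bigr => k _.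
by rewrite subnK //; case: eqP => // ->.
Qed.

Lemma leS_le a b : leS A a b -> a <= b.
Proof. by case/andP. Qed.

Lemma leS_refl s : leS A s s.
Proof. by rewrite /leS leqnn subnn inS0. Qed.

Lemma leS_trans a b c : leS A a b -> leS A b c -> leS A a c.
Proof.
move=> /andP [hab sab] /andP [hbc sbc]; apply/andP; split; first exact: leq_trans hbc.
by rewrite (_ : c - a = (c - b) + (b - a)); [exact: inS_add | lia].
Qed.

Lemma leS_anti a b : leS A a b -> leS A b a -> a = b.
Proof. by move=> /leS_le h1 /leS_le h2; apply/eqP; rewrite eqn_leq h1 h2. Qed.

Definition ambiguous (s : nat) : bool := 1 < dnum A s.

Lemma ambiguousP s :
  reflect (exists x y, [/\ x \in Z A s, y \in Z A s & x != y]) (ambiguous s).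
Proof. exact: card_gt1P. Qed.

Lemma ambiguous_inS s : ambiguous s -> inS A s.
Proof. by case/ambiguousP => x [y [hx _ _]]; apply/set0Pn; exists x. Qed.

Lemma ffun_neq (I : finType) m (x y : {ffun I -> 'I_m}) :
  x != y -> exists k, (x k : nat) != y k.
Proof.
move=> hxy; apply/existsP; apply: contraNT hxy => /existsPn same.
by apply/eqP/ffunP => k; apply/val_inj/eqP; rewrite -[_ == _]negbK same.
Qed.

(* Ambiguity is stable under translation by S: two distinct factorizations of
   s, completed by a common factorization of t, stay distinct. *)
Lemma ambiguous_add s t : ambiguous s -> inS A t -> ambiguous (s + t).
Proof.
case/ambiguousP => x [y [hx hy hxy]] /set0Pn [z hz].
move: hx hy hz; rewrite !inZ_phi => /eqP hx /eqP hy /eqP hz.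
have xz : phiA (fun k => x k + z k) = s + t by rewrite phiD hx hz.
have yz : phiA (fun k => y k + z k) = s + t by rewrite phiD hy hz.
have [[x' hx' ex'] [y' hy' ey']] := (fact_of_fun xz, fact_of_fun yz).
apply/ambiguousP; exists x', y'; split => //; have [k hk] := ffun_neq hxy.
by apply: contraNneq hk => h; rewrite -(eqn_add2r (z k)) -ex' -ey' h.
Qed.

Lemma ambiguous_mul j c : ambiguous j -> 0 < c -> ambiguous (c * j).
Proof.
move=> hj; elim: c => // -[|c] IH _; first by rewrite mul1n.
by rewrite mulSn addnC ambiguous_add ?IH ?ambiguous_inS.
Qed.

Lemma not_ambiguous0 : ~~ ambiguous 0.
Proof.
apply/ambiguousP => -[x [y [_ _ /eqP]]]; apply; apply/ffunP => k.
by apply/val_inj; case: (x k) => [[]] //; case: (y k) => [[]].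
Qed.

Lemma ambiguous_share (s : nat) (x y : fact_vec A s) (i : 'I_e) :
  x \in Z A s -> y \in Z A s -> x != y -> 0 < x i -> 0 < y i ->
  ambiguous (s - n i) /\ leS A (s - n i) s.
Proof.
move=> hx hy hxy xi yi; move: (hx) (hy); rewrite !inZ_phi => /eqP sx /eqP sy.
have nis : n i <= s.
  by rewrite -sx; apply: leq_trans (term_le_phi _ i); rewrite leq_pmull.
split; last by rewrite /leS leq_subr subKn // inS_gen.
have xi' : phiA (fun k => x k - (k == i)) = s - n i by rewrite phi_sub_delta ?sx.
have yi' : phiA (fun k => y k - (k == i)) = s - n i by rewrite phi_sub_delta ?sy.
have [[x' hx' ex'] [y' hy' ey']] := (fact_of_fun xi', fact_of_fun yi').
apply/ambiguousP; exists x', y'; split => //; have [k hk] := ffun_neq hxy.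
apply: contraNneq hk => h; have := ex' k; rewrite h ey'.
have dx : (k == i) <= x k by case: eqP => // ->.
have dy : (k == i) <= y k by case: eqP => // ->.
by move: dx dy; case: (k == i) => /= dx dy; lia.
Qed.
End Factorizations.

Section Generators.
Variable A : seq nat.
Hypothesis hmin : min_gens A.
Local Notation e := (size A).
Local Notation n i := (nth 0%N A i).
Local Notation phiA := (@phi A).
Local Notation ambiguous := (ambiguous A).

Lemma phi_eq0 (f : 'I_e -> nat) k : phiA f = 0 -> f k = 0.
Proof. by move=> f0; apply/eqP; rewrite -leqn0 -f0 coord_le_phi. Qed.

Lemma gen_fact_unique (i : 'I_e) (v : fact_vec A (n i)) : v \in Z A (n i) ->
  forall k, (v k : nat) = (k == i).
Proof.
rewrite inZ_phi => /eqP hv.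
have vi : 0 < v i.
  rewrite lt0n; apply/negP => /eqP vi0; apply: (hmin (i := i)).
  by exists (fun k => nat_of_ord (v k)).
have rest : phiA (fun k => v k - (k == i)) = 0 by rewrite phi_sub_delta // hv subnn.
move=> k; have := phi_eq0 k rest; have : (k == i) <= v k by case: eqP => // ->.
by case: (k == i) => /=; lia.
Qed.

Lemma not_ambiguous_gen (i : 'I_e) : ~~ ambiguous (n i).
Proof.
apply/ambiguousP => -[x [y [hx hy /ffun_neq [k]]]].
by rewrite (gen_fact_unique hx) (gen_fact_unique hy) eqxx.
Qed.

Lemma ambiguous_notin_gens u : ambiguous u -> u \notin A.
Proof.
apply: contraL => uA; have ui : index u A < e by rewrite index_mem.
by have := not_ambiguous_gen (Ordinal ui); rewrite /= nth_index.
Qed.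

(* An ambiguous element is at least 2 (an element 1 would be a generator). *)
Lemma ambiguous_ge2 u : ambiguous u -> 1 < u.
Proof.
case: u => [|[|//]] hu; first by rewrite (negbTE (not_ambiguous0 A)) in hu.
have /ambiguousP [x [_ [hx _ _]]] := hu; move: (hx); rewrite inZ_phi => /eqP x1.
have [k xk] : exists k, 0 < x k.
  apply/existsP; apply: contraTT hx => /existsPn x0.
  by rewrite inZ_phi /phi big1 // => k _; move: (x0 k); rewrite lt0n negbK => /eqP ->.
have nk1 : n k = 1.
  have : n k <= 1.
    by rewrite -x1; apply: leq_trans (term_le_phi _ k); rewrite leq_pmull.
  by have := gens_pos hmin k; lia.
by move: hu; rewrite -nk1 (negbTE (not_ambiguous_gen k)).
Qed.
End Generators.

Section MinimalAmbiguous.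
Variable A : seq nat.
Hypothesis hmin : min_gens A.
Local Notation ambiguous := (ambiguous A).

(* Two distinct factorizations of a minimal ambiguous element have disjoint
   supports: a shared generator would give a smaller ambiguous element. *)
Lemma min_ambiguous_disjoint u (x y : fact_vec A u) : minimalS A ambiguous u ->
  x \in Z A u -> y \in Z A u -> x != y -> dotv x y = 0.
Proof.
move=> [hu umin] hx hy hxy; apply/eqP/contraT.
rewrite /dotv sum_nat_eq0 negb_forall => /existsP [k].
rewrite muln_eq0 negb_or -!lt0n => /andP [xk yk].
have [hU hle] := ambiguous_share hmin hx hy hxy xk yk.
have u0 : u = 0 by have := umin _ hU hle; have := gens_pos hmin k; lia.
by rewrite u0 (negbTE (not_ambiguous0 A)) in hu.
Qed.

(* Hence nabla_u has no edges at all and is disconnected. *)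
Lemma min_ambiguous_Betti u : minimalS A ambiguous u -> Betti A u.
Proof.
move=> hmu; have /ambiguousP [x [y [hx hy hxy]]] := hmu.1.
exists x, y; split => //; apply/negP => /connectP [[|x' p] /= hp hl].
  by rewrite hl eqxx in hxy.
move: hp => /andP [/and4P [_ hx' xx' dxx'] _].
by rewrite (min_ambiguous_disjoint hmu hx hx') // eq_sym in dxx'.
Qed.

Lemma Betti_ambiguous s : Betti A s -> ambiguous s.
Proof.
move=> [x [y [hx hy hxy]]]; apply/ambiguousP; exists x, y; split => //.
by apply: contraNneq hxy => ->; apply: connect0.
Qed.

(* Below every ambiguous s lies a minimal ambiguous element: the numerically
   least ambiguous u with u <=_S s. *)
Lemma min_ambiguous_below s : ambiguous s ->
  exists2 u, minimalS A ambiguous u & leS A u s.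
Proof.
move=> hs; have hex : exists u, ambiguous u && leS A u s.
  by exists s; rewrite hs leS_refl.
case: (ex_minnP hex) => u /andP [hu hus] umin; exists u => //; split => // y hy hyu.
apply/eqP; rewrite eqn_leq (leS_le hyu) umin //.
by rewrite hy (leS_trans hmin hyu hus).
Qed.

Lemma minimal_sandwich (P : nat -> Prop) :
  (forall u, minimalS A ambiguous u -> P u) -> (forall s, P s -> ambiguous s) ->
  forall d, minimalS A P d <-> minimalS A ambiguous d.
Proof.
move=> minP Pamb d; split => [[Pd dmin]|[ambd dmin]].
  split => [|y hy hyd]; first exact: Pamb.
  have [u hu huy] := min_ambiguous_below hy.
  have ud : u = d by apply: dmin (minP _ hu) (leS_trans hmin huy hyd).
  by apply: leS_anti hyd _; rewrite -ud.
by split => [|y Py hyd]; [exact: minP | apply: dmin => //; exact: Pamb].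
Qed.

Lemma min_Betti_iff d : minimalS A (Betti A) d <-> minimalS A ambiguous d.
Proof. exact: minimal_sandwich min_ambiguous_Betti Betti_ambiguous d. Qed.

(* At a minimal ambiguous element every factorization is isolated. *)
Lemma min_ambiguous_inum u : minimalS A ambiguous u -> inum A u = dnum A u.
Proof.
move=> hmu; apply: eq_card => z; rewrite inE /isolated.
case hz: (z \in Z A u) => //=; apply/forallP => x; apply/implyP => /andP [hx hxz].
by rewrite (min_ambiguous_disjoint hmu hz hx) // eq_sym.
Qed.
End MinimalAmbiguous.

Section Truncation.
Local Open Scope ring_scope.

Lemma sum_neq0 (V : nmodType) (I : finType) (F : I -> V) :
  \sum_(i : I) F i != 0 -> exists i, F i != 0.
Proof.
move=> h; apply/existsP; apply: contraNT h => /existsPn F0.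
by rewrite big1 // => i _; apply/eqP; rewrite -[_ == _]negbK F0.
Qed.

Definition eqm (N : nat) (p q : {poly int}) := forall k, (k <= N)%N -> p`_k = q`_k.

Lemma eqm_trans N p q r : eqm N p q -> eqm N q r -> eqm N p r.
Proof. by move=> hpq hqr k hk; rewrite hpq // hqr. Qed.

Lemma eqmMr N p q r : eqm N p q -> eqm N (p * r) (q * r).
Proof.
move=> hpq k hk; rewrite !coefM; apply: eq_bigr => i _; rewrite hpq //.
by apply: leq_trans hk; rewrite -ltnS.
Qed.

Lemma eqmMl N p q r : eqm N p q -> eqm N (r * p) (r * q).
Proof. by move=> hpq; rewrite ![r * _]mulrC; apply: eqmMr. Qed.

Lemma eqm1M N p q : eqm N p 1 -> eqm N q 1 -> eqm N (p * q) 1.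
Proof. by move=> hp hq; apply: eqm_trans (eqmMr q hp) _; rewrite mul1r. Qed.

Lemma eqm_factor_high N (m : nat) : (N < m)%N -> eqm N (1 - 'X^m) 1.
Proof.
move=> hm k hk; rewrite coefB coefXn (_ : (k == m) = false) ?subr0 //.
by apply/negbTE; lia.
Qed.

Lemma coef0_factor (j a : nat) : (0 < j)%N -> ((1 - 'X^j) ^+ a : {poly int})`_0 = 1.
Proof.
move=> hj; rewrite -horner_coef0 horner_exp hornerD hornerN hornerXn hornerC expr0n.
by rewrite (negbTE (lt0n_neq0 hj)) subr0 expr1n.
Qed.

Lemma coef_factor_at (q : {poly int}) (j a : nat) : (0 < j)%N ->
  (q * (1 - 'X^j) ^+ a)`_j = q`_j - a%:R * q`_0.
Proof.
move=> hj; elim: a => [|a IH]; first by rewrite expr0 mulr1 mul0r subr0.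
rewrite exprSr mulrA mulrBr mulr1 coefB coefMXn ltnn subnn IH coef0M coef0_factor //.
by rewrite mulr1 mulrSr; ring.
Qed.

Lemma coef_factor_dvd (j a k : nat) :
  ((1 - 'X^j) ^+ a : {poly int})`_k != 0 -> (j %| k)%N.
Proof.
have base l : ((1 - 'X^j) : {poly int})`_l != 0 -> (j %| l)%N.
  by rewrite coefB coef1 coefXn; case: (l =P j) => [->|_]; case: l => //=; rewrite subr0.
elim: a k => [|a IH] k; first by rewrite expr0 coef1; case: k.
rewrite exprS coefM => /sum_neq0 [i].
rewrite mulf_eq0 negb_or => /andP [/base ji /IH jki].
by rewrite -(subnK (ltnSE (ltn_ord i))) dvdn_add.
Qed.

(* 1 - x^j is a unit of Z[[x]], so it may be cancelled in congruences. *)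
Lemma eqm_cancel_factor N (j : nat) p q : (0 < j)%N ->
  eqm N (p * (1 - 'X^j)) (q * (1 - 'X^j)) <-> eqm N p q.
Proof.
move=> hj; split=> [h k|]; last exact: eqmMr.
elim: k {-2}k (leqnn k) => [|K IH] k hkK hk;
  have := h k hk; rewrite !mulrBr !mulr1 !coefB !coefMXn.
  by rewrite (_ : (k < j)%N) ?subr0 //; lia.
case: ltnP => hkj; first by rewrite !subr0.
by rewrite (IH (k - j)%N); [move/addIr | lia | lia].
Qed.
End Truncation.

Section ExponentSequences.
Local Open Scope ring_scope.

Definition negp (z : int) : nat := if z < 0 then absz z else 0%N.
Definition posp (z : int) : nat := if 0 < z then absz z else 0%N.

Lemma posp_negp (z : int) : (posp z)%:R - (negp z)%:R = z.
Proof. by rewrite /negp /posp; do ![case: ifPn => ?]; lia. Qed.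

(* The factors of prod_(1 <= j <= N) (1 - x^j)^(g j) with negative (Lam) and
   positive (Pi) exponents; F has exponent sequence g up to degree N when
   F * Lam g N = Pi g N mod x^(N+1).  This is the shape of the definition of
   cyclotomic_exponents. *)
Definition Lam (g : nat -> int) (N : nat) : {poly int} :=
  \prod_(1 <= j < N.+1 | g j < 0) (1 - 'X^j) ^+ `|g j|%N.
Definition Pi (g : nat -> int) (N : nat) : {poly int} :=
  \prod_(1 <= j < N.+1 | 0 < g j) (1 - 'X^j) ^+ `|g j|%N.
Definition hasexp (F : {poly int}) (g : nat -> int) (N : nat) :=
  eqm N (F * Lam g N) (Pi g N).

Lemma LamE g N : Lam g N = \prod_(1 <= j < N.+1) (1 - 'X^j) ^+ negp (g j).
Proof. by rewrite /Lam big_mkcond; apply: eq_bigr => j _; rewrite /negp; case: ifP. Qed.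

Lemma PiE g N : Pi g N = \prod_(1 <= j < N.+1) (1 - 'X^j) ^+ posp (g j).
Proof. by rewrite /Pi big_mkcond; apply: eq_bigr => j _; rewrite /posp; case: ifP. Qed.

Lemma hasexp_ext F g h N : g =1 h -> hasexp F g N -> hasexp F h N.
Proof.
move=> gh; rewrite /hasexp.
have -> : Lam g N = Lam h N by rewrite !LamE; apply: eq_bigr => j _; rewrite gh.
by have -> : Pi g N = Pi h N by rewrite !PiE; apply: eq_bigr => j _; rewrite gh.
Qed.

Definition bump_exp (g : nat -> int) (j : nat) : nat -> int :=
  fun k => g k + (k == j)%:R.

Lemma bump_exp_high g N j : (N < j)%N ->
  Lam (bump_exp g j) N = Lam g N /\ Pi (bump_exp g j) N = Pi g N.
Proof.
move=> hj; rewrite !LamE !PiE; split; apply: eq_big_nat => k hk;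
  by rewrite /bump_exp (_ : (k == j) = false) ?addr0 //; apply/negbTE; lia.
Qed.

Lemma prod_factor_out (h : nat -> {poly int}) N j : (1 <= j <= N)%N ->
  \prod_(1 <= k < N.+1) h k = h j * \prod_(1 <= k < N.+1 | k != j) h k.
Proof. by move=> hj; rewrite (bigD1_seq j) ?iota_uniq // mem_index_iota ltnS. Qed.

Lemma prod_bump_exp_other (p : int -> nat) g N j :
  \prod_(1 <= k < N.+1 | k != j) (1 - 'X^k) ^+ p (bump_exp g j k) =
  \prod_(1 <= k < N.+1 | k != j) (1 - 'X^k) ^+ p (g k) :> {poly int}.
Proof. by apply: eq_bigr => k /negbTE kj; rewrite /bump_exp kj addr0. Qed.

Lemma bump_exp_cases (z : int) :
  (negp z = (negp (z + 1)).+1 /\ posp (z + 1) = posp z) \/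
  (negp (z + 1) = negp z /\ posp (z + 1) = (posp z).+1).
Proof.
by rewrite /negp /posp; case: (ltrP z 0) => hz; [left|right]; do ![case: ifPn => ?]; lia.
Qed.

Lemma hasexp_factor F g N j : (0 < j)%N ->
  hasexp (F * (1 - 'X^j)) (bump_exp g j) N <-> hasexp F g N.
Proof.
move=> hj; case: (leqP j N) => hjN; last first.
  rewrite /hasexp; have [-> ->] := bump_exp_high g hjN.
  have high : eqm N (F * (1 - 'X^j) * Lam g N) (F * Lam g N).
    by rewrite mulrAC -[X in eqm _ _ X]mulr1; apply: eqmMl; exact: eqm_factor_high.
  by split=> h k hk; rewrite -h // high.
have hjr : (1 <= j <= N)%N by rewrite hj.
rewrite /hasexp !LamE !PiE !(prod_factor_out _ hjr) !prod_bump_exp_other.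
rewrite /bump_exp eqxx mulr1n.
set L := \prod_(1 <= k < N.+1 | k != j) _; set P := \prod_(1 <= k < N.+1 | k != j) _.
set t := 1 - 'X^j; case: (bump_exp_cases (g j)) => [[-> ->]|[-> ->]].
  rewrite (_ : F * t * (t ^+ _ * L) = F * (t ^+ (negp (g j + 1)).+1 * L)) //.
  by rewrite exprS; ring.
rewrite (_ : F * t * (t ^+ _ * L) = F * (t ^+ negp (g j) * L) * t); last by ring.
rewrite exprS (_ : t * _ * P = t ^+ posp (g j) * P * t); last by ring.
exact: eqm_cancel_factor.
Qed.

Lemma hasexp_factors F g N (l : seq nat) :
  all (fun x => 0 < x)%N l -> hasexp F g N ->
  hasexp (F * \prod_(x <- l) (1 - 'X^x)) (fun k => g k + (count_mem k l)%:R) N.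
Proof.
elim: l F g => [|x l IH] F g /=.
  by move=> _ H; rewrite big_nil mulr1; apply: hasexp_ext H => k; rewrite addr0.
move=> /andP [hx hl] H; rewrite big_cons mulrA.
apply: hasexp_ext (IH _ _ hl (proj2 (hasexp_factor F g N hx) H)) => k.
by rewrite /bump_exp natrD addrA eq_sym.
Qed.

Lemma prod_factors_coef0 (m : nat) (h : nat -> nat) :
  (\prod_(1 <= j < m.+1) (1 - 'X^j) ^+ h j : {poly int})`_0 = 1.
Proof.
rewrite big_nat_cond; apply: (big_ind (fun p : {poly int} => p`_0 = 1)).
- by rewrite coef1.
- by move=> p q hp hq; rewrite coef0M hp hq mulr1.
by move=> j /andP [/andP [hj _] _]; apply: coef0_factor.
Qed.

Lemma exp_recursion F g n : hasexp F g n -> F`_0 = 1 -> (0 < n)%N ->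
  g n = (Pi g n.-1)`_n - (F * Lam g n.-1)`_n.
Proof.
case: n => [|m] // H F0 _; have := H m.+1 (leqnn _).
rewrite LamE PiE (big_nat_recr m.+1) // (big_nat_recr m.+1) //= -LamE -PiE mulrA.
rewrite !coef_factor_at // coef0M F0 LamE PiE !prod_factors_coef0 !mulr1 -LamE -PiE.
move=> E; rewrite -(posp_negp (g m.+1)); move: E.
move: ((posp (g m.+1))%:R : int) ((negp (g m.+1))%:R : int) => b a.
by move: ((Pi g m)`_m.+1) ((F * Lam g m)`_m.+1) => P Q; lia.
Qed.
End ExponentSequences.

Section AmbiguouslySupported.
Variable A : seq nat.
Hypothesis hmin : min_gens A.
Local Notation ambiguous := (ambiguous A).
Local Open Scope ring_scope.

Definition amb_supported (N : nat) (p : {poly int}) :=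
  p`_0 = 1 /\ forall k, (0 < k <= N)%N -> p`_k != 0 -> ambiguous k.

Lemma amb_supported1 N : amb_supported N 1.
Proof. by split=> [|[|k] //]; rewrite coef1. Qed.

(* Closure under products, since ambiguous + ambiguous is ambiguous. *)
Lemma amb_supportedM N p q :
  amb_supported N p -> amb_supported N q -> amb_supported N (p * q).
Proof.
move=> [p0 hp] [q0 hq]; split; first by rewrite coef0M p0 q0 mulr1.
move=> k hk; rewrite coefM => /sum_neq0 [i]; rewrite mulf_eq0 negb_or => /andP [pi qi].
have ik := ltn_ord i; case: (posnP i) => [i0|i_pos].
  by move: qi; rewrite i0 subn0; apply: hq.
case: (ltnP i k) => [ilt|kle]; last by rewrite (_ : k = i) in hk *; [exact: hp | lia].
have Ui : ambiguous i by apply: hp pi; lia.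
have Uk : ambiguous (k - i) by apply: hq qi; lia.
by have := ambiguous_add hmin Ui (ambiguous_inS Uk); rewrite subnKC // ltnW.
Qed.

Lemma amb_supported_factor N j a : ambiguous j -> amb_supported N ((1 - 'X^j) ^+ a).
Proof.
move=> hj; have j2 := ambiguous_ge2 hmin hj; split; first by apply: coef0_factor; lia.
move=> k /andP [k0 _] /coef_factor_dvd /dvdnP [c kc].
by rewrite kc ambiguous_mul //; move: k0; rewrite kc; case: c {kc}.
Qed.

(* At a minimal ambiguous degree m, products of ambiguously supported series
   have additive coefficients: the cross terms would give an ambiguous
   element strictly below m for <=_S. *)
Lemma amb_supportedM_coef_min N m p q :
  amb_supported N p -> amb_supported N q ->
  minimalS A ambiguous m -> (0 < m <= N)%N ->
  (p * q)`_m = p`_m + q`_m.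
Proof.
move=> [p0 hp] [q0 hq] [hm mmin]; case: m hm mmin => // m hm mmin hmN.
rewrite coefM big_ord_recl big_ord_recr big1 => [|i _].
  by rewrite lift0 /= subn0 subnn p0 q0 mul1r mulr1 add0r addrC.
rewrite lift0 /=; have ilt := ltn_ord i.
apply/eqP/contraT; rewrite mulf_eq0 negb_or => /andP [pi qi].
have Ui : ambiguous i.+1 by apply: hp pi; lia.
have Uk : ambiguous (m.+1 - i.+1) by apply: hq qi; lia.
have hle : leS A i.+1 m.+1 by rewrite /leS (ambiguous_inS Uk) andbT; lia.
by have := mmin _ Ui hle; lia.
Qed.

(* A factor (1 - x^j)^a with j ambiguous and j < m vanishes at a minimal
   ambiguous m, since m would be a proper multiple of j. *)
Lemma coef_factor_min m j a :
  ambiguous j -> (j < m)%N -> minimalS A ambiguous m ->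
  ((1 - 'X^j) ^+ a : {poly int})`_m = 0.
Proof.
move=> hj jm [hm mmin]; apply/eqP/contraT => /coef_factor_dvd /dvdnP [c mc].
have c2 : (1 < c)%N.
  by move: jm; rewrite mc; case: c {mc} => [|[|c]] //; rewrite mul1n ltnn.
have hle : leS A j m.
  rewrite /leS mc leq_pmull ?(ltnW c2) //= (_ : (c * j - j = c.-1 * j)%N); last first.
    by case: (c) c2 => // c' _; rewrite mulSn addKn.
  by apply: ambiguous_inS; apply: ambiguous_mul => //; lia.
by have := mmin _ hj hle; lia.
Qed.

Section FactorProducts.
Variables (P : pred nat) (h : nat -> nat) (M : nat).
Hypothesis P_amb : forall i, (0 < i <= M)%N -> P i -> ambiguous i.
Local Notation prodP := (\prod_(1 <= i < M.+1 | P i) (1 - 'X^i) ^+ h i : {poly int}).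

Lemma amb_supported_prod N : amb_supported N prodP.
Proof.
rewrite big_nat_cond; apply: (big_ind (amb_supported N)).
- exact: amb_supported1.
- exact: amb_supportedM.
by move=> i /andP [/andP [i1 iM] Pi]; apply/amb_supported_factor/P_amb => //; lia.
Qed.

Lemma coef_prod_min m : minimalS A ambiguous m -> (M < m)%N -> prodP`_m = 0.
Proof.
move=> hm Mm; have m0 : (0 < m)%N by lia.
suff [] : amb_supported m prodP /\ prodP`_m = 0 by [].
rewrite big_nat_cond; apply: (big_ind (fun p => amb_supported m p /\ p`_m = 0)).
- by split; [exact: amb_supported1 | rewrite coef1; case: (m) m0].
- move=> p q [hp p0] [hq q0]; split; first exact: amb_supportedM.
  by rewrite (amb_supportedM_coef_min hp hq hm) ?p0 ?q0 ?addr0 // m0 leqnn.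
move=> i /andP [/andP [i1 iM] Pi]; have Ui : ambiguous i by apply: P_amb => //; lia.
by split; [exact: amb_supported_factor | apply: coef_factor_min Ui _ hm; lia].
Qed.
End FactorProducts.

Lemma LamPi_supported g M N :
  (forall i, (0 < i <= M)%N -> g i != 0 -> ambiguous i) ->
  amb_supported N (Lam g M) /\ amb_supported N (Pi g M).
Proof.
move=> hg; split; apply: amb_supported_prod => i hi gi; apply: hg => //.
  exact: ltr0_neq0.
by rewrite gt_eqF.
Qed.

Lemma LamPi_coef_min g M m :
  (forall i, (0 < i <= M)%N -> g i != 0 -> ambiguous i) ->
  minimalS A ambiguous m -> (M < m)%N -> (Lam g M)`_m = 0 /\ (Pi g M)`_m = 0.
Proof.
move=> hg hm Mm; split; apply: coef_prod_min hm Mm => i hi gi; apply: hg => //.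
  exact: ltr0_neq0.
by rewrite gt_eqF.
Qed.
End AmbiguouslySupported.

Section HilbertTimesGenerators.
Variable A : seq nat.
Hypothesis hmin : min_gens A.
Local Notation e := (size A).
Local Notation n i := (nth 0%N A i).
Local Notation ambiguous := (ambiguous A).
Local Open Scope ring_scope.

Definition PA : {poly int} := \prod_(x <- A) (1 - 'X^x).
Definition Dser (N : nat) : {poly int} := \prod_(i < e) \sum_(c < N.+1) 'X^(c * n i).

Lemma gens_pos_mem x : x \in A -> (0 < x)%N.
Proof.
move=> xA; have xi : (index x A < e)%N by rewrite index_mem.
by have := gens_pos hmin (Ordinal xi); rewrite /= nth_index.
Qed.

Lemma inS_mem x : x \in A -> inS A x.
Proof.
move=> xA; have xi : (index x A < e)%N by rewrite index_mem.
by have := inS_gen hmin (Ordinal xi); rewrite /= nth_index.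
Qed.

Lemma card_fact_vec N s : (s <= N)%N ->
  #|[set f : fact_vec A N | phiv f == s]| = dnum A s.
Proof.
move=> sN; have hle : (s.+1 <= N.+1)%N by [].
pose w (v : fact_vec A s) : fact_vec A N := [ffun i => widen_ord hle (v i)].
have winj : injective w.
  move=> v1 v2 h; apply/ffunP => i; apply/val_inj.
  by have := congr1 (fun f : fact_vec A N => nat_of_ord (f i)) h; rewrite /w !ffunE.
rewrite /dnum -(card_imset _ winj); apply: eq_card => f; rewrite inE.
apply/idP/imsetP => [hf|[v hv ->]].
  have [v hv ev] := fact_of_fun hmin (eqP hf); exists v => //.
  by apply/ffunP => i; apply/val_inj; rewrite /w ffunE /= ev.
move: hv; rewrite inE /phiv => /eqP hv; apply/eqP; apply: eq_trans hv.
by apply: eq_bigr => i _; rewrite /w ffunE.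
Qed.

Lemma Dser_coef N s : (s <= N)%N -> (Dser N)`_s = (dnum A s)%:R.
Proof.
move=> sN; rewrite /Dser bigA_distr_bigA /= coef_sum -(card_fact_vec sN).
under eq_bigr => f _ do rewrite prodrXr coefXn.
rewrite -sum1_card natr_sum [RHS]big_mkcond /=; apply: eq_bigr => f _.
by rewrite inE /phiv eq_sym; case: eqP.
Qed.

Lemma geometric (M a : nat) :
  (\sum_(c < M) 'X^(c * a)) * (1 - 'X^a) = 1 - 'X^(M * a) :> {poly int}.
Proof.
elim: M => [|M IH]; first by rewrite big_ord0 mul0r mul0n expr0 subrr.
by rewrite big_ord_recr /= mulrDl IH mulSn addnC exprD; ring.
Qed.

Lemma Dser_PA N : eqm N (Dser N * PA) 1.
Proof.
rewrite /PA (big_nth 0%N) big_mkord /Dser -big_split /=.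
apply: (big_ind (fun p => eqm N p 1)) => //; first exact: eqm1M.
by move=> i _; rewrite geometric; apply: eqm_factor_high; have := gens_pos hmin i; nia.
Qed.

Lemma hilb_coef N s : (s <= N)%N -> (hilb_trunc A N)`_s = (inS A s)%:R.
Proof.
move=> sN; rewrite /hilb_trunc coef_sum big_mkcond /=.
rewrite (bigD1_seq s) ?iota_uniq ?mem_index_iota //= coefXn eqxx big1 ?addr0.
  by case: (inS A s).
by move=> t /negbTE ts; rewrite coefXn eq_sym ts; case: (inS A t).
Qed.

Lemma PA_coef_inS k : PA`_k != 0 -> inS A k.
Proof.
rewrite /PA big_seq; elim/big_ind: _ k => [k|p q hp hq k|x xA k].
- by rewrite coef1; case: k => // _; apply: inS0.
- rewrite coefM => /sum_neq0 [i]; rewrite mulf_eq0 negb_or => /andP [/hp pi /hq qi].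
  by rewrite -(subnKC (ltnSE (ltn_ord i))) inS_add.
rewrite coefB coef1 coefXn; case: (k =P x) => [->|_]; first by rewrite inS_mem.
by case: k => // _; apply: inS0.
Qed.

Lemma PA_coef0 : PA`_0 = 1.
Proof.
rewrite /PA big_seq; elim/big_ind: _ => [|p q hp hq|x xA]; first exact: coef1.
  by rewrite coef0M hp hq mulr1.
by rewrite -(expr1 (1 - 'X^x)) coef0_factor // gens_pos_mem.
Qed.

Definition Yser N := hilb_trunc A N - Dser N.

Lemma Yser_coef N s : (s <= N)%N -> (Yser N)`_s = (inS A s)%:R - (dnum A s)%:R.
Proof. by move=> sN; rewrite coefB hilb_coef // Dser_coef. Qed.

Lemma Yser_ambiguous N s : (s <= N)%N -> (Yser N)`_s != 0 -> ambiguous s.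
Proof.
move=> sN; rewrite Yser_coef //; case Ss: (inS A s).
  by move: Ss; rewrite /inS -card_gt0 /ambiguous /dnum; case: #|Z A s| => [|[|d]].
by move: Ss; rewrite /inS => /negbFE /eqP Z0; rewrite /dnum Z0 cards0 subrr eqxx.
Qed.

Lemma hilbPA_split N : eqm N (hilb_trunc A N * PA) (1 + Yser N * PA).
Proof.
have -> : hilb_trunc A N * PA = Dser N * PA + Yser N * PA by rewrite /Yser; ring.
by move=> k kN; rewrite !coefD Dser_PA.
Qed.

Lemma hilbPA_supported N : amb_supported A N (hilb_trunc A N * PA).
Proof.
split; first by rewrite coef0M hilb_coef // inS0 PA_coef0 mulr1.
move=> k /andP [k0 kN].
rewrite hilbPA_split // coefD coef1 (negbTE (lt0n_neq0 k0)) add0r.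
rewrite coefM => /sum_neq0 [i]; rewrite mulf_eq0 negb_or => /andP [yi pi].
have ik := ltnSE (ltn_ord i).
have := ambiguous_add hmin (Yser_ambiguous (leq_trans ik kN) yi) (PA_coef_inS pi).
by rewrite subnKC.
Qed.

Lemma hilbPA_coef_min N m : minimalS A ambiguous m -> (0 < m <= N)%N ->
  (hilb_trunc A N * PA)`_m = 1 - (dnum A m)%:R.
Proof.
move=> [hm mmin] /andP [m0 mN].
rewrite hilbPA_split // coefD coef1 (negbTE (lt0n_neq0 m0)) add0r.
rewrite coefM big_ord_recr /= subnn PA_coef0 mulr1 Yser_coef // (ambiguous_inS hm).
rewrite big1 ?add0r // => i _; have im := ltn_ord i.
apply/eqP/contraT; rewrite mulf_eq0 negb_or => /andP [yi pi].
have Ui := Yser_ambiguous (leq_trans (ltnW im) mN) yi.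
have hle : leS A i m by rewrite /leS (PA_coef_inS pi) andbT /=; lia.
by have := mmin _ Ui hle; lia.
Qed.
End HilbertTimesGenerators.

Section CyclotomicExponents.
Variable A : seq nat.
Hypothesis hmin : min_gens A.
Variable ex : nat -> int.
Hypothesis hex : cyclotomic_exponents A ex.
Local Notation ambiguous := (ambiguous A).
Local Open Scope ring_scope.

(* The exponent sequence of K_N = H_N * P_A = (1 - x) H_N * P_A / (1 - x):
   it differs from (e_j) by -1 at j = 1 and by +1 at each generator. *)
Definition kexp (k : nat) : int := ex k - (k == 1%N)%:R + (count_mem k A)%:R.

Lemma hilbPA_hasexp N : hasexp (hilb_trunc A N * PA A) kexp N.
Proof.
have hpos : all (fun x => 0 < x)%N A by apply/allP => x; apply: gens_pos_mem.
apply/(hasexp_factor _ _ _ (ltn0Sn 0)).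
have -> : hilb_trunc A N * PA A * (1 - 'X^1) = (1 - 'X) * hilb_trunc A N * PA A.
  by rewrite expr1; ring.
apply: hasexp_ext (hasexp_factors hpos (hex (m := N))) => k.
by rewrite /bump_exp /kexp; ring.
Qed.

(* Nonzero exponents of K_N occur only at ambiguous degrees: by induction, the
   products in the recursion for kexp j are ambiguously supported, so if j
   is not ambiguous both have zero coefficient at j. *)
Lemma kexp_ambiguous j : (0 < j)%N -> kexp j != 0 -> ambiguous j.
Proof.
elim: j {-2}j (leqnn j) => [|J IH] j jJ j0; first lia.
apply: contraR => namb; apply/eqP.
have below i : (0 < i <= j.-1)%N -> kexp i != 0 -> ambiguous i.
  by move=> ij; apply: IH; lia.
have hK := hilbPA_supported hmin j.
have [hL hP] := LamPi_supported hmin j below.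
have jj : (0 < j <= j)%N by rewrite j0 leqnn.
have vanish p : amb_supported A j p -> p`_j = 0.
  by move=> [_ hp]; apply/eqP/contraT => /(hp j jj) ambj; rewrite ambj in namb.
rewrite (exp_recursion (hilbPA_hasexp (N := j)) hK.1 j0).
by rewrite (vanish _ hP) (vanish _ (amb_supportedM hmin hK hL)) subr0.
Qed.

(* At a minimal ambiguous m the recursion collapses to 0 - (1 - d(m)). *)
Lemma kexp_min m : minimalS A ambiguous m -> kexp m = (dnum A m)%:R - 1.
Proof.
move=> hm; have m0 : (0 < m)%N by have := ambiguous_ge2 hmin hm.1; lia.
have below i : (0 < i <= m.-1)%N -> kexp i != 0 -> ambiguous i.
  by case/andP => i0 _; apply: kexp_ambiguous.
have mpred : (m.-1 < m)%N by rewrite ltn_predL.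
have [Lm Pm] := LamPi_coef_min hmin below hm mpred.
have [hL _] := LamPi_supported hmin m below.
have hK := hilbPA_supported hmin m.
have mm : (0 < m <= m)%N by rewrite m0 leqnn.
rewrite (exp_recursion (hilbPA_hasexp (N := m)) hK.1 m0) Pm.
rewrite (amb_supportedM_coef_min hK hL hm mm) Lm addr0.
by rewrite (hilbPA_coef_min hmin hm mm) opprB add0r.
Qed.

Lemma kexp_ex j : j != 1%N -> j \notin A -> kexp j = ex j.
Proof.
move=> j1 jA; rewrite /kexp (negbTE j1) subr0.
by move/count_memPn: jA => ->; rewrite addr0.
Qed.

Lemma Eset_ambiguous j : Eset A ex j -> ambiguous j.
Proof.
move=> [j2 [exj jA]]; apply: kexp_ambiguous; first lia.
by rewrite kexp_ex //; [apply/eqP | apply/eqP => j1; rewrite j1 in j2].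
Qed.

Lemma min_ambiguous_ex m : minimalS A ambiguous m -> ex m = (dnum A m)%:R - 1.
Proof.
move=> hm; have m2 := ambiguous_ge2 hmin hm.1.
rewrite -kexp_min // kexp_ex //; last exact: ambiguous_notin_gens hm.1.
by apply/eqP => m1; rewrite m1 in m2.
Qed.

Lemma min_ambiguous_Eset m : minimalS A ambiguous m -> Eset A ex m.
Proof.
move=> hm; split; first exact: ambiguous_ge2 hm.1.
split; last exact: ambiguous_notin_gens hm.1.
rewrite min_ambiguous_ex //; have := hm.1; rewrite /ambiguous.
by case: (dnum A m) => [|[|d]] // _; apply/eqP; rewrite subr_eq0 pnatr_eq1.
Qed.

Lemma min_Eset_iff d : minimalS A (Eset A ex) d <-> minimalS A ambiguous d.
Proof. exact: (minimal_sandwich hmin min_ambiguous_Eset Eset_ambiguous d). Qed.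
End CyclotomicExponents.

Theorem theorem5p3 (A : seq nat) (hA : numerical_semigroup_mingens A)
    (ex : nat -> int) (hex : cyclotomic_exponents A ex) :
  (forall d : nat, minimalS A (Betti A) d <-> minimalS A (Eset A ex) d) /\
  (forall alpha : nat, minimalS A (Eset A ex) alpha ->
     ex alpha = ((dnum A alpha)%:Z - 1)%R /\
     ex alpha = ((inum A alpha)%:Z - 1)%R).
Proof.
have hmin := hA.1; split => [d|alpha].
  by rewrite (min_Betti_iff hmin) (min_Eset_iff hmin hex).
move=> /(min_Eset_iff hmin hex) hm.
by rewrite (min_ambiguous_inum hmin hm) (min_ambiguous_ex hmin hex hm) natz.
Qed.
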